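(* For nonzero complex parameters $g,a$ let $T(g,a)$ be the infinite matrix indexed by $i,j\in\mathbb{Z}_{\ge 0}$ with entries $$T(g,a)_{i,j}=(ag)^{i+j}\sum_{k=0}^{\min(i,j)}\binom{i}{k}\binom{j}{k}a^{-2k}.$$ Let $(g,a)$ and $(g',a')$ be two such parameter pairs, with $|g|,|g'|$ small enough that the matrix products $T(g,a)T(g',a')$ and $T(g',a')T(g,a)$ (defined by $(XY)_{i,j}=\sum_{k\ge0}X_{i,k}Y_{k,j}$) converge absolutely entrywise. Then $T(g,a)$ and $T(g',a')$ commute if and only if $\varphi(g,a)=\varphi(g',a')$, where $$\varphi(g,a)=\frac{1-g^2(1-a^2)}{a g}.$$
   Context: $T(g,a)$ is the transfer matrix of the model of 1+1-dimensional Lorentzian triangulations, with weight $g$ per triangle and weight $a$ per pair of consecutive triangles in a time slice pointing in the same direction; the indices $i,j$ count the up- and down-pointing triangles of a time slice. *)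

From Stdlib Require Import Reals.
Open Scope R_scope.

Definition Cx : Type := (R * R)%type.
Definition Cx_of_R (x : R) : Cx := (x, 0).
Definition Cx0 : Cx := (0, 0).
Definition Cx1 : Cx := (1, 0).
Definition Cxadd (z w : Cx) : Cx := (fst z + fst w, snd z + snd w).
Definition Cxopp (z : Cx) : Cx := (- fst z, - snd z).
Definition Cxsub (z w : Cx) : Cx := Cxadd z (Cxopp w).
Definition Cxmul (z w : Cx) : Cx :=
  (fst z * fst w - snd z * snd w, fst z * snd w + snd z * fst w).
Definition Cxinv (z : Cx) : Cx :=
  (fst z / (fst z ^ 2 + snd z ^ 2), - snd z / (fst z ^ 2 + snd z ^ 2)).
Definition Cxdiv (z w : Cx) : Cx := Cxmul z (Cxinv w).
Fixpoint Cxpow (z : Cx) (n : nat) : Cx :=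
  match n with O => Cx1 | S m => Cxmul z (Cxpow z m) end.
Definition Cxmod (z : Cx) : R := sqrt (fst z ^ 2 + snd z ^ 2).

(* Finite sum f 0 + ... + f n  (n+1 terms). *)
Fixpoint Cxsum (f : nat -> Cx) (n : nat) : Cx :=
  match n with O => f O | S m => Cxadd (Cxsum f m) (f (S m)) end.

Definition Cxseries_sum_to (u : nat -> Cx) (l : Cx) : Prop :=
  Un_cv (fun N => fst (Cxsum u N)) (fst l) /\
  Un_cv (fun N => snd (Cxsum u N)) (snd l).

Definition Cxseries_abs_conv (u : nat -> Cx) : Prop :=
  exists s : R, Un_cv (fun N => sum_f_R0 (fun k => Cxmod (u k)) N) s.

Definition Imat : Type := nat -> nat -> Cx.

Definition prod_terms (X Y : Imat) (i j : nat) : nat -> Cx :=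
  fun k => Cxmul (X i k) (Y k j).

Definition product_abs_conv (X Y : Imat) : Prop :=
  forall i j : nat, Cxseries_abs_conv (prod_terms X Y i j).

Definition imat_commute (X Y : Imat) : Prop :=
  forall i j : nat, exists l : Cx,
    Cxseries_sum_to (prod_terms X Y i j) l /\
    Cxseries_sum_to (prod_terms Y X i j) l.

Definition Tmat (g a : Cx) : Imat :=
  fun i j =>
    Cxmul (Cxpow (Cxmul a g) (i + j))
      (Cxsum (fun k => Cxmul (Cx_of_R (Binomial.C i k * Binomial.C j k))
                             (Cxpow (Cxinv a) (2 * k)))
             (Nat.min i j)).

Definition phi (g a : Cx) : Cx :=
  Cxdiv (Cxsub Cx1 (Cxmul (Cxpow g 2) (Cxsub Cx1 (Cxpow a 2))))
        (Cxmul a g).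

(* T(g,a) satisfies the weighted Delannoy recurrence
     T(i+1,k+1) = al T(i,k+1) + al T(i+1,k) + be T(i,k),
     T(i+1,0) = al T(i,0),  T(0,k+1) = al T(0,k),  T(0,0) = 1,
   with al = a g and be = g^2 (1 - a^2); this is Pascal's rule applied to the binomial sum.
   In a convergent product P = T1 T2 of two such matrices, shifting the summation index and
   using the recurrence of T1 in its second index and of T2 in its first one shows that
     c P(i+1,j+1) = p P(i,j+1) + q P(i+1,j) + r P(i,j),  c P(i+1,0) = p P(i,0),
     c P(0,j+1) = q P(0,j),  c P(0,0) = 1,
   where c = 1 - al1 al2, p = al1 + be1 al2, q = al2 + al1 be2 and r = be1 be2 - al1 al2.
   Exchanging the factors exchanges p and q and nothing else. As c P(0,0) = 1 forces c <> 0,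
   the recurrence determines P, so T1 T2 = T2 T1 iff p = q, and p = q says exactly that
   (1 - be1) / al1 = (1 - be2) / al2, i.e. phi(g,a) = phi(g',a'). *)

From Stdlib Require Import Reals Lia Factorial ClassicalEpsilon.
From Coquelicot Require Import Coquelicot.
Open Scope C_scope.

Lemma Cxsum_sum_n (f : nat -> C) (n : nat) : Cxsum f n = sum_n f n.
Proof.
  induction n as [|n IH]; simpl.
  - now rewrite sum_O.
  - now rewrite sum_Sn, IH.
Qed.

Lemma filterlim_C_components {T : Type} {F : (T -> Prop) -> Prop} {FF : Filter F}
    (f : T -> C) (l : C) :
  filterlim f F (locally l) <->
  filterlim (fun x => fst (f x)) F (locally (fst l)) /\
  filterlim (fun x => snd (f x)) F (locally (snd l)).
Proof.
  rewrite !filterlim_locally. split.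
  - intros H. split; intros eps; eapply filter_imp, (H eps); now intros x [].
  - intros [H1 H2] eps. exact (filter_and _ _ (H1 eps) (H2 eps)).
Qed.

Lemma Un_cv_filterlim (u : nat -> R) (l : R) :
  Un_cv u l <-> filterlim u eventually (locally l).
Proof. now rewrite <- is_lim_seq_Reals. Qed.

Lemma Cxseries_sum_to_is_series (u : nat -> C) (l : C) :
  Cxseries_sum_to u l <-> is_series u l.
Proof.
  unfold Cxseries_sum_to, is_series.
  rewrite filterlim_C_components, !Un_cv_filterlim.
  split; intros [H1 H2]; split; (eapply filterlim_ext; [|eassumption]);
    intro n; simpl; now rewrite Cxsum_sum_n.
Qed.

Lemma Cxseries_abs_conv_ex_series (u : nat -> C) :
  Cxseries_abs_conv u -> ex_series u.
Proof.
  intros [s Hs].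
  apply (@ex_series_le C_AbsRing C_CompleteNormedModule _ (fun k => Cmod (u k))).
  - intro n. apply Rle_refl.
  - exists s. apply Un_cv_filterlim.
    eapply Un_cv_ext; [|exact Hs]. intro n. now rewrite sum_n_Reals.
Qed.

Lemma is_series_C_unique (u : nat -> C) (l l' : C) :
  is_series u l -> is_series u l' -> l = l'.
Proof. apply filterlim_locally_unique. Qed.

Lemma is_series_C_scal (c : C) (u : nat -> C) (l : C) :
  is_series u l -> is_series (fun k => c * u k) (c * l).
Proof. exact (@is_series_scal_l C_AbsRing C_NormedModule c u l). Qed.

Lemma is_series_C_plus (u v : nat -> C) (lu lv : C) :
  is_series u lu -> is_series v lv -> is_series (fun k => u k + v k) (lu + lv).
Proof. exact (@is_series_plus C_AbsRing C_NormedModule u v lu lv). Qed.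

Lemma is_series_C_cons (c : C) (u : nat -> C) (l : C) :
  is_series u l -> is_series (fun k => match k with O => c | S k => u k end) (c + l).
Proof.
  intros H. apply is_series_decr_1.
  match goal with |- is_series _ ?l' => replace l' with l; [exact H|] end.
  change (l = c + l + - c). ring.
Qed.

Lemma product_sums_exist (X Y : Imat) :
  product_abs_conv X Y -> exists S : Imat, forall i j, is_series (prod_terms X Y i j) (S i j).
Proof.
  intros H.
  exists (fun i j => proj1_sig (constructive_indefinite_description _
                                  (Cxseries_abs_conv_ex_series _ (H i j)))).
  intros i j. exact (proj2_sig (constructive_indefinite_description _ _)).
Qed.

Lemma imat_commute_iff_sums_eq (X Y S S' : Imat) :
  (forall i j, is_series (prod_terms X Y i j) (S i j)) ->
  (forall i j, is_series (prod_terms Y X i j) (S' i j)) ->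
  imat_commute X Y <-> (forall i j, S i j = S' i j).
Proof.
  intros HS HS'. unfold imat_commute. setoid_rewrite Cxseries_sum_to_is_series.
  split.
  - intros H i j. destruct (H i j) as [l [Hl Hl']].
    rewrite (is_series_C_unique _ _ _ (HS i j) Hl).
    exact (is_series_C_unique _ _ _ Hl' (HS' i j)).
  - intros E i j. exists (S i j). split; [apply HS | rewrite E; apply HS'].
Qed.

(* A one-step [linear_combination]: [L = R] because [L - R] is a multiple of [x - y]. *)
Lemma Ceq_of_sub_mul (x y m L R : C) : x = y -> L - R = m * (x - y) -> L = R.
Proof.
  intros <- H. transitivity (L - R + R); [ring|]. rewrite H. ring.
Qed.

Lemma Cmult_eq_1_neq_0 (x y : C) : x * y = 1 -> x <> 0 /\ y <> 0.
Proof. intros E. split; intros H0; apply C1_nz; rewrite <- E, H0; ring. Qed.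

Lemma Cmult_reg_l (c x y : C) : c <> 0 -> c * x = c * y -> x = y.
Proof. intros Hc E. apply (Ceq_of_sub_mul _ _ (/ c) _ _ E). field. exact Hc. Qed.

(* Unlike [Binomial.C n k], which is [n! / k!] rather than 0 for [k > n],
   [binom] vanishes beyond the diagonal and satisfies Pascal's rule for all [k]. *)
Fixpoint binom (n k : nat) : nat :=
  match k with
  | O => 1
  | S k' => match n with O => O | S n' => binom n' k' + binom n' k end
  end.

Lemma binom_n_0 (n : nat) : binom n 0 = 1%nat.
Proof. now destruct n. Qed.

Lemma binom_gt (n k : nat) : (n < k)%nat -> binom n k = O.
Proof.
  revert k. induction n as [|n IH]; intros [|k] Hk; simpl; try lia; try easy.
  rewrite !IH by lia. reflexivity.
Qed.

Lemma Binomial_C_n_0 (n : nat) : Binomial.C n 0 = 1%R.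
Proof.
  unfold Binomial.C. rewrite Nat.sub_0_r. simpl (fact 0).
  simpl (INR 1). field. apply INR_fact_neq_0.
Qed.

Lemma Binomial_C_n_n (n : nat) : Binomial.C n n = 1%R.
Proof. rewrite pascal_step1, Nat.sub_diag by lia. apply Binomial_C_n_0. Qed.

Lemma Binomial_C_binom (n k : nat) : (k <= n)%nat -> Binomial.C n k = INR (binom n k).
Proof.
  revert k. induction n as [|n IH]; intros [|k] Hk; try lia;
    try (rewrite Binomial_C_n_0; reflexivity).
  simpl binom. rewrite plus_INR, <- !IH by lia.
  destruct (Nat.eq_dec k n) as [->|Hkn].
  - rewrite binom_gt, !Binomial_C_n_n by lia. simpl. ring.
  - rewrite <- !IH by lia. apply eq_sym, pascal. lia.
Qed.

Definition binom_prod_term (v : C) (i k m : nat) : C :=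
  INR (binom i m) * INR (binom k m) * v ^ m.

Definition binom_prod_sum (v : C) (i k : nat) : C :=
  sum_n (binom_prod_term v i k) (Nat.min i k).

Lemma sum_binom_prod_term_stable (v : C) (i k N : nat) :
  (Nat.min i k <= N)%nat -> (sum_n (binom_prod_term v i k) N : C) = binom_prod_sum v i k.
Proof.
  intros HN. induction HN as [|N HN IH]; [reflexivity|].
  rewrite sum_Sn, IH. unfold binom_prod_term.
  assert (Hz : binom i (S N) = O \/ binom k (S N) = O).
  { destruct (Nat.min_spec i k) as [[_ E]|[_ E]]; rewrite E in HN;
      [left|right]; apply binom_gt; lia. }
  destruct Hz as [-> | ->]; simpl INR; change plus with Cplus; ring.
Qed.

Lemma binom_prod_term_pascal (v : C) (i k m : nat) :
  binom_prod_term v (S i) (S k) (S m) + binom_prod_term v i k (S m) =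
  binom_prod_term v i (S k) (S m) + binom_prod_term v (S i) k (S m)
  + v * binom_prod_term v i k m.
Proof.
  unfold binom_prod_term. simpl binom. rewrite !plus_INR, !RtoC_plus. simpl. ring.
Qed.

Lemma sum_binom_prod_term_pascal (v : C) (i k N : nat) :
  (sum_n (binom_prod_term v (S i) (S k)) (S N) : C) + sum_n (binom_prod_term v i k) (S N) =
  sum_n (binom_prod_term v i (S k)) (S N) + sum_n (binom_prod_term v (S i) k) (S N)
  + v * sum_n (binom_prod_term v i k) N.
Proof.
  induction N as [|N IH].
  - rewrite !sum_Sn, !sum_O. change plus with Cplus.
    transitivity (binom_prod_term v (S i) (S k) 0 + binom_prod_term v i k 0
      + (binom_prod_term v (S i) (S k) 1 + binom_prod_term v i k 1)); [ring|].
    rewrite binom_prod_term_pascal. unfold binom_prod_term. rewrite !binom_n_0. ring.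
  - rewrite (sum_Sn (binom_prod_term v i k) N), !(sum_Sn _ (S N)). change plus with Cplus.
    transitivity (sum_n (binom_prod_term v (S i) (S k)) (S N)
      + sum_n (binom_prod_term v i k) (S N)
      + (binom_prod_term v (S i) (S k) (S (S N)) + binom_prod_term v i k (S (S N)))); [ring|].
    rewrite IH, binom_prod_term_pascal. ring.
Qed.

Lemma binom_prod_sum_pascal (v : C) (i k : nat) :
  binom_prod_sum v (S i) (S k) + binom_prod_sum v i k =
  binom_prod_sum v i (S k) + binom_prod_sum v (S i) k + v * binom_prod_sum v i k.
Proof.
  pose proof (sum_binom_prod_term_pascal v i k (i + k)) as P.
  rewrite !sum_binom_prod_term_stable in P by lia. exact P.
Qed.

Lemma binom_prod_sum_n_0 (v : C) (i : nat) : binom_prod_sum v i 0 = 1.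
Proof.
  unfold binom_prod_sum, binom_prod_term. rewrite Nat.min_0_r, sum_O, !binom_n_0.
  simpl. ring.
Qed.

Lemma binom_prod_sum_0_n (v : C) (k : nat) : binom_prod_sum v 0 k = 1.
Proof.
  unfold binom_prod_sum, binom_prod_term. rewrite Nat.min_0_l, sum_O, !binom_n_0.
  simpl. ring.
Qed.

Lemma Tmat_binom_prod_sum (g a : C) (i k : nat) :
  (Tmat g a i k : C) = (a * g) ^ (i + k) * binom_prod_sum ((/ a) ^ 2) i k.
Proof.
  unfold Tmat, binom_prod_sum. rewrite Cxsum_sum_n. apply (f_equal2 Cmult); [reflexivity|].
  apply sum_n_ext_loc. intros m Hm. unfold binom_prod_term.
  rewrite !Binomial_C_binom, RtoC_mult, <- Cpow_mult_r by lia. reflexivity.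
Qed.

Record delannoy_rec (c p q r : C) (T : nat -> nat -> C) : Prop := {
  delannoy_00 : c * T O O = 1;
  delannoy_S0 : forall i, c * T (S i) O = p * T i O;
  delannoy_0S : forall k, c * T O (S k) = q * T O k;
  delannoy_SS : forall i k, c * T (S i) (S k) = p * T i (S k) + q * T (S i) k + r * T i k
}.
Arguments delannoy_00 {c p q r T}.
Arguments delannoy_S0 {c p q r T}.
Arguments delannoy_0S {c p q r T}.
Arguments delannoy_SS {c p q r T}.

Lemma Tmat_delannoy_rec (g a : C) :
  a <> 0 -> delannoy_rec 1 (a * g) (a * g) (g ^ 2 * (1 - a ^ 2)) (Tmat g a).
Proof.
  intros Ha. split; [|intro i|intro k|intros i k]; rewrite !Tmat_binom_prod_sum;
    set (v := (/ a) ^ 2);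
    rewrite ?binom_prod_sum_n_0, ?binom_prod_sum_0_n, ?Nat.add_0_r,
      ?Nat.add_succ_l, ?Nat.add_succ_r, ?Cpow_S.
  1-3: ring.
  apply (Ceq_of_sub_mul _ _ ((a * g) ^ 2 * (a * g) ^ (i + k)) _ _
           (binom_prod_sum_pascal v i k)).
  unfold v. field. exact Ha.
Qed.

Section DelannoyProduct.

Variables (p1 q1 r1 p2 q2 r2 : C) (T1 T2 P : nat -> nat -> C).
Hypotheses (HT1 : delannoy_rec 1 p1 q1 r1 T1) (HT2 : delannoy_rec 1 p2 q2 r2 T2)
  (HS : forall i j, is_series (fun k => T1 i k * T2 k j) (P i j)).

(* The sum of [T1 i k * T2 (S k) j], computed through the recurrence of [T2] in its
   first index. *)
Fixpoint shifted_product (i j : nat) : C :=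
  match j with
  | O => p2 * P i O
  | S j' => p2 * P i (S j') + q2 * shifted_product i j' + r2 * P i j'
  end.

Lemma is_series_shifted_product (i j : nat) :
  is_series (fun k => T1 i k * T2 (S k) j) (shifted_product i j).
Proof.
  induction j as [|j IH]; simpl.
  - eapply is_series_ext; [|apply is_series_C_scal, HS].
    intro k. symmetry.
    apply (Ceq_of_sub_mul _ _ (T1 i k) _ _ (delannoy_S0 HT2 k)). ring.
  - eapply is_series_ext;
      [|apply is_series_C_plus; [apply is_series_C_plus|]; apply is_series_C_scal;
        [apply HS | exact IH | apply HS]].
    intro k. symmetry.
    apply (Ceq_of_sub_mul _ _ (T1 i k) _ _ (delannoy_SS HT2 k j)). ring.
Qed.

Lemma product_row_0 (j : nat) : P O j = T2 O j + q1 * shifted_product O j.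
Proof.
  apply (is_series_C_unique (fun k => T1 O k * T2 k j)); [apply HS|].
  eapply is_series_ext;
    [|apply is_series_C_cons, is_series_C_scal, is_series_shifted_product].
  intros [|k]; symmetry.
  - apply (Ceq_of_sub_mul _ _ (T2 O j) _ _ (delannoy_00 HT1)). ring.
  - apply (Ceq_of_sub_mul _ _ (T2 (S k) j) _ _ (delannoy_0S HT1 k)). ring.
Qed.

Lemma product_row_S (i j : nat) :
  P (S i) j = p1 * P i j + q1 * shifted_product (S i) j + r1 * shifted_product i j.
Proof.
  transitivity (p1 * P i j + (0 + (q1 * shifted_product (S i) j + r1 * shifted_product i j)));
    [|ring].
  apply (is_series_C_unique (fun k => T1 (S i) k * T2 k j)); [apply HS|].
  eapply is_series_ext;
    [|apply is_series_C_plus;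
      [apply is_series_C_scal, HS
      |apply is_series_C_cons, is_series_C_plus;
         apply is_series_C_scal, is_series_shifted_product]].
  intros [|k]; symmetry.
  - apply (Ceq_of_sub_mul _ _ (T2 O j) _ _ (delannoy_S0 HT1 i)). ring.
  - apply (Ceq_of_sub_mul _ _ (T2 (S k) j) _ _ (delannoy_SS HT1 i k)). ring.
Qed.

Theorem delannoy_rec_product :
  delannoy_rec (1 - q1 * p2) (p1 + r1 * p2) (q2 + q1 * r2) (r1 * r2 - p1 * q2) P.
Proof.
  assert (T2_00 : T2 O O = 1) by (rewrite <- (delannoy_00 HT2); ring).
  assert (T2_0S : forall k, T2 O (S k) = q2 * T2 O k)
    by (intro k; rewrite <- (delannoy_0S HT2 k); ring).
  split.
  - pose proof (product_row_0 O) as E. cbn [shifted_product] in E.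
    rewrite T2_00 in E. apply (Ceq_of_sub_mul _ _ 1 _ _ E). ring.
  - intro i. pose proof (product_row_S i O) as E. cbn [shifted_product] in E.
    apply (Ceq_of_sub_mul _ _ 1 _ _ E). ring.
  - intro j. pose proof (product_row_0 (S j)) as E. cbn [shifted_product] in E.
    rewrite T2_0S in E. rewrite (product_row_0 j) in E |- *.
    apply (Ceq_of_sub_mul _ _ 1 _ _ E). ring.
  - intros i j. pose proof (product_row_S i (S j)) as E. cbn [shifted_product] in E.
    rewrite (product_row_S i j) in E |- *. apply (Ceq_of_sub_mul _ _ 1 _ _ E). ring.
Qed.

End DelannoyProduct.

Lemma delannoy_rec_unique (c p q r : C) (T T' : nat -> nat -> C) :
  delannoy_rec c p q r T -> delannoy_rec c p q r T' -> forall i j, T i j = T' i j.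
Proof.
  intros H H'. pose proof (proj1 (Cmult_eq_1_neq_0 _ _ (delannoy_00 H))) as Hc.
  induction i as [|i IHi]; induction j as [|j IHj]; apply (Cmult_reg_l c _ _ Hc).
  - now rewrite (delannoy_00 H), (delannoy_00 H').
  - now rewrite (delannoy_0S H), (delannoy_0S H'), IHj.
  - now rewrite (delannoy_S0 H), (delannoy_S0 H'), IHi.
  - now rewrite (delannoy_SS H), (delannoy_SS H'), !IHi, IHj.
Qed.

Lemma delannoy_rec_swap_eq_iff (c p q r : C) (T T' : nat -> nat -> C) :
  delannoy_rec c p q r T -> delannoy_rec c q p r T' ->
  (forall i j, T i j = T' i j) <-> p = q.
Proof.
  intros H H'. split.
  - intros E. apply (Cmult_reg_l (T O O)).
    + exact (proj2 (Cmult_eq_1_neq_0 _ _ (delannoy_00 H))).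
    + rewrite !(Cmult_comm (T O O)), <- (delannoy_S0 H O), (E O O), <- (delannoy_S0 H' O), E.
      reflexivity.
  - intros <-. exact (delannoy_rec_unique _ _ _ _ _ _ H H').
Qed.

Lemma Cdiv_one_sub_eq_iff (al1 be1 al2 be2 : C) : al1 <> 0 -> al2 <> 0 ->
  ((1 - be1) / al1 = (1 - be2) / al2 <-> al1 + be1 * al2 = al2 + al1 * be2).
Proof.
  intros H1 H2. split; intros E.
  - apply (Ceq_of_sub_mul _ _ (- (al1 * al2)) _ _ E). field. auto.
  - apply (Ceq_of_sub_mul _ _ (- / (al1 * al2)) _ _ E). field. auto.
Qed.

Lemma phi_form (g a : C) : phi g a = (1 - g ^ 2 * (1 - a ^ 2)) / (a * g).
Proof. reflexivity. Qed.

Theorem mainTheorem1 (g a g' a' : Cx) :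
  g <> Cx0 -> a <> Cx0 -> g' <> Cx0 -> a' <> Cx0 ->
  product_abs_conv (Tmat g a) (Tmat g' a') ->
  product_abs_conv (Tmat g' a') (Tmat g a) ->
  (imat_commute (Tmat g a) (Tmat g' a') <-> phi g a = phi g' a').
Proof.
  intros Hg Ha Hg' Ha' Hconv Hconv'.
  destruct (product_sums_exist _ _ Hconv) as [P HP].
  destruct (product_sums_exist _ _ Hconv') as [P' HP'].
  pose proof (delannoy_rec_product _ _ _ _ _ _ _ _ _
                (Tmat_delannoy_rec g a Ha) (Tmat_delannoy_rec g' a' Ha') HP) as R.
  pose proof (delannoy_rec_product _ _ _ _ _ _ _ _ _
                (Tmat_delannoy_rec g' a' Ha') (Tmat_delannoy_rec g a Ha) HP') as R'.
  set (al := a * g) in R, R'. set (al' := a' * g') in R, R'.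
  set (be := g ^ 2 * (1 - a ^ 2)) in R, R'. set (be' := g' ^ 2 * (1 - a' ^ 2)) in R, R'.
  rewrite (Cmult_comm al' al), (Cmult_comm be' al), (Cmult_comm al' be), (Cmult_comm be' be)
    in R'.
  rewrite (imat_commute_iff_sums_eq _ _ _ _ HP HP'),
    (delannoy_rec_swap_eq_iff _ _ _ _ _ _ R R').
  rewrite !phi_form. symmetry. apply Cdiv_one_sub_eq_iff; apply Cmult_neq_0; assumption.
Qed.
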